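(* For integers $n>4$ and $k\ge1$, $F_{4,k}(n)=0$ if and only if $(k,n)\in\{(3,8),(5,8),(6,12),(7,8)\}$. In particular $F_{4,k}$ has no positive integer root for $k>7$.
   Context: For an integer $j\ge0$, $\binom{x}{j}=x(x-1)\cdots(x-j+1)/j!$ as a polynomial in $x$, and $\binom{x}{j}=0$ for $j<0$. For integers $s\ge1$, $k\ge1$, the Moser polynomial is $F_{s,k}(x)=\sum_{p=1}^{s}(-1)^{p-1}p^{k-1}\binom{x}{s-p}$. *)

From HB Require Import structures.
From mathcomp Require Import all_boot all_order all_algebra.
Set Implicit Arguments. Unset Strict Implicit. Unset Printing Implicit Defensive.
Import Order.TTheory GRing.Theory Num.Theory.
Local Open Scope ring_scope.

Definition binom_poly (R : fieldType) (j : nat) : {poly R} :=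
  ((j`!)%:R)^-1 *: \prod_(i < j) ('X - (i%:R)%:P).

(* Moser polynomial F_{s,k}(x) = sum_{p=1}^{s} (-1)^(p-1) p^(k-1) binom(x, s-p).
   Since p <= s, the index s - p (truncated nat subtraction) is the true value >= 0. *)
Definition moser (R : fieldType) (s k : nat) : {poly R} :=
  \sum_(1 <= p < s.+1) (((-1) ^+ (p - 1) * (p%:R) ^+ (k - 1)) *: binom_poly R (s - p)).

From Stdlib Require Import ZArith.
From HB Require Import structures.
From mathcomp Require Import all_boot all_order all_algebra.
From mathcomp Require Import zify ring.
Import Order.TTheory GRing.Theory Num.Theory.

Set Implicit Arguments.
Unset Strict Implicit.
Unset Printing Implicit Defensive.

(* With j = k - 1, 6*F_{4,k}(N) = N(N-1)(N-2) + 6*3^j*N - 3*2^j*N(N-1) - 6*4^j, so a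
   positive root N divides 6*4^j and hence N = m*2^i with m in {1, 3}.  For N >= 25 we get
   i >= 4; if i >= j + 2 the cubic term dominates, and otherwise comparing powers of 2 forces
   2^i to divide (N-1)(N-2) + 6*3^j, which is 4 or 8 modulo 16.  For N <= 24 and j >= 12 the
   term 6*4^j dominates, and the remaining 24 x 12 cases are settled by computation. *)

Definition moser4_lhs (N j : nat) : nat := N * (N - 1) * (N - 2) + 6 * 3 ^ j * N.
Definition moser4_rhs (N j : nat) : nat := 3 * 2 ^ j * N * (N - 1) + 6 * 4 ^ j.

Section Evaluation.
Local Open Scope ring_scope.

Lemma horner_moser4 (R : numFieldType) k (x : R) : (moser R 4 k.+1).[x] * 6 =
  x * (x - 1) * (x - 2) - 3 * 2 ^+ k * x * (x - 1) + 6 * 3 ^+ k * x - 6 * 4 ^+ k.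
Proof.
rewrite horner_sum; do 4 rewrite big_nat_recl //.
rewrite big_geq // !hornerE !horner_prod !big_ord_recr !big_ord0 /= !hornerE.
rewrite !subn1 /= !expr1n (_ : 3`!%:R = 6 :> R) // (_ : 2`!%:R = 2 :> R) //.
rewrite (_ : (4 - 3)`! = 1) // (_ : (4 - 4)`! = 1) //.
by field.
Qed.

Lemma moser4_natE (R : numFieldType) N j :
  (moser R 4 j.+1).[N%:R] * 6 = (moser4_lhs N j)%:R - (moser4_rhs N j)%:R.
Proof.
rewrite horner_moser4 /moser4_lhs /moser4_rhs.
case: N => [|[|N]]; rewrite ?subn1 ?subn2 /= !(natrD, natrM, natrX, mulr1n); [ring|ring|].
by rewrite -[N.+2]addn2 -[N.+1]addn1 !natrD; ring.
Qed.

Lemma moser4_root_nat (R : numFieldType) N j :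
  ((moser R 4 j.+1).[N%:R] == 0) = (moser4_lhs N j == moser4_rhs N j).
Proof.
by rewrite -(eqr_nat R) -[in RHS]subr_eq0 -moser4_natE mulf_eq0 pnatr_eq0 orbF.
Qed.

End Evaluation.

(* Six times the left-hand side is 24^3 + 6*3^j*24, the bound on moser4_lhs for N <= 24. *)
Lemma expn4_gt_expn3 j : 12 <= j -> 2304 + 24 * 3 ^ j < 4 ^ j.
Proof.
elim: j => [//|j IH]; rewrite leq_eqVlt => /orP [/eqP <-|/IH]; first by lia.
by rewrite !expnS; lia.
Qed.

Lemma moser4_lhs_lt_rhs N j : N <= 24 -> 12 <= j -> moser4_lhs N j < moser4_rhs N j.
Proof.
move=> N_le /expn4_gt_expn3 j_large; rewrite /moser4_lhs /moser4_rhs.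
have cubic : N * (N - 1) * (N - 2) <= 24 * 24 * 24 by rewrite !leq_mul //; lia.
have linear : 3 ^ j * N <= 3 ^ j * 24 by rewrite leq_mul2l N_le orbT.
lia.
Qed.

Lemma moser4_rhs_lt_lhs N j : 16 <= N -> 4 * 2 ^ j <= N -> moser4_rhs N j < moser4_lhs N j.
Proof.
rewrite /moser4_lhs /moser4_rhs (expnMn 2 2 j) => N_ge16.
move: (2 ^ j) => a N_ge_4a.
have quadratic : 6 * (a * a) < N * (N - 1) by nia.
have cubic : N * (N - 1) * (3 * a + 1) <= N * (N - 1) * (N - 2) by rewrite leq_mul2l; lia.
nia.
Qed.

Lemma moser4_root_dvd N j : moser4_lhs N j = moser4_rhs N j -> N %| 6 * 4 ^ j.
Proof.
rewrite /moser4_lhs /moser4_rhs => root.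
have : N %| N * (N - 1) * (N - 2) + 6 * 3 ^ j * N.
  by apply: dvdn_add; [rewrite -mulnA; apply: dvdn_mulr | apply: dvdn_mull].
by rewrite root dvdn_addr // mulnAC; apply: dvdn_mull.
Qed.

Lemma expn3_mod8 j : 3 ^ j %% 8 = 1 \/ 3 ^ j %% 8 = 3.
Proof. by elim: j => [|j IH]; [left | rewrite expnS -modnMmr; case: IH => ->; auto]. Qed.

Lemma moser4_cofactor_not_dvd16 N j :
  0 < N -> 16 %| N -> ~~ (16 %| (N - 1) * (N - 2) + 6 * 3 ^ j).
Proof.
move=> N_gt0 /dvdnP [t defN]; rewrite {N_gt0}defN in N_gt0 *.
have -> : (t * 16 - 1) * (t * 16 - 2) = 16 * (t * (t * 16 - 3)) + 2 by nia.
have := expn3_mod8 j; lia.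
Qed.

Lemma moser4_root_2part_dvd_cofactor N j m i : odd m -> N = m * 2 ^ i -> 0 < i <= j.+1 ->
  moser4_lhs N j = moser4_rhs N j -> 2 ^ i %| (N - 1) * (N - 2) + 6 * 3 ^ j.
Proof.
move=> m_odd defN /andP [i_gt0 i_le] root.
set X := _ + _.
have eqX : 2 ^ i * (m * X) = 3 * (2 ^ (i + j) * (m * (N - 1)) + 2 ^ (2 * j + 1)).
  have -> : 2 ^ (2 * j + 1) = 2 * (2 ^ j * 2 ^ j).
    by rewrite -expnD addnn -mul2n addn1 expnS.
  by move: root; rewrite /moser4_lhs /moser4_rhs /X expnD (expnMn 2 2 j) defN; nia.
have pow_dvd : 2 ^ (i + i) %| 2 ^ (i + j) * (m * (N - 1)) + 2 ^ (2 * j + 1).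
  case: (ltngtP i j.+1) i_le => // [i_le_j | ->] _.
    by apply: dvdn_add; [apply: dvdn_mulr |]; rewrite dvdn_exp2l //; lia.
  (* For i = j + 1 the missing factor 2 comes from m (N - 1) + 1 being even. *)
  have N_odd : odd (N - 1) by rewrite defN oddB ?oddM ?oddX //; lia.
  rewrite (_ : j.+1 + j = 2 * j + 1) 1?(_ : j.+1 + j.+1 = (2 * j + 1).+1) //; try lia.
  move: (2 * j + 1) => e.
  rewrite -[X in _ + X]muln1 -mulnDr expnSr dvdn_pmul2l ?expn_gt0 //.
  by rewrite dvdn2 oddD oddM m_odd N_odd.
have : 2 ^ i * 2 ^ i %| 2 ^ i * (m * X) by rewrite eqX -expnD dvdn_mull.
rewrite dvdn_pmul2l ?expn_gt0 // Gauss_dvdr //.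
by apply: coprimeXl; rewrite coprime2n.
Qed.

Lemma moser4_no_root_ge25 N j : 25 <= N -> moser4_lhs N j != moser4_rhs N j.
Proof.
move=> N_ge25; apply/eqP => root; have N_gt0 : 0 < N by lia.
have [m] := pfactor_coprime (isT : prime 2) N_gt0; rewrite coprime2n => m_odd defN.
set i := logn 2 N in defN.
have m_le3 : m <= 3.
  have : m %| 3 * 2 ^ (2 * j).+1.
    rewrite (_ : 3 * _ = 6 * 4 ^ j); last by rewrite expnS mulnA expnM.
    by apply: dvdn_trans _ (moser4_root_dvd root); rewrite defN dvdn_mulr.
  by rewrite Gauss_dvdl ?coprimeXr ?coprimen2 // => /dvdn_leq; apply.
have i_ge4 : 4 <= i.
  rewrite leqNgt; apply/negP => i_lt4.
  have : 2 ^ i <= 2 ^ 3 by rewrite leq_exp2l.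
  have := leq_mul m_le3 (leqnn (2 ^ i)); lia.
have [i_large | i_small] := leqP j.+2 i.
  have N_ge16 : 16 <= N by lia.
  have N_ge_pow : 4 * 2 ^ j <= N.
    rewrite defN (_ : 4 * _ = 2 ^ j.+2); last by rewrite !expnS mulnA.
    by apply: leq_trans (leq_pmull _ (odd_gt0 m_odd)); rewrite leq_exp2l.
  by have := moser4_rhs_lt_lhs N_ge16 N_ge_pow; rewrite root ltnn.
apply: (negP (moser4_cofactor_not_dvd16 j N_gt0 _)).
  by rewrite defN dvdn_mull // (_ : 16 = 2 ^ 4) // dvdn_exp2l.
apply: dvdn_trans _ (moser4_root_2part_dvd_cofactor m_odd defN _ root); last by lia.
by rewrite (_ : 16 = 2 ^ 4) // dvdn_exp2l.
Qed.

(* The equation over binary integers, so that the finite check below does not compute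
   with unary naturals such as 4^11. *)
Local Open Scope Z_scope.
Definition moser4_eqbZ (n e : Z) : bool :=
  n * (n - 1) * (n - 2) + 6 * 3 ^ e * n =? 3 * 2 ^ e * n * (n - 1) + 6 * 4 ^ e.
Local Close Scope Z_scope.

Lemma moser4_eqbZP N j :
  moser4_lhs N j = moser4_rhs N j <-> moser4_eqbZ (Z.of_nat N) (Z.of_nat j).
Proof.
apply: (iff_trans _ (iff_sym (Z.eqb_eq _ _))); rewrite /moser4_lhs /moser4_rhs.
case: N => [|[|N]]; [lia | lia |].
by rewrite (_ : N.+2 - 1 = N.+1) ?subSS ?subn0 //; lia.
Qed.

Definition moser4_roots : seq (nat * nat) :=
  [:: (1, 1); (1, 2); (1, 3); (2, 2); (2, 3); (2, 4); (3, 3); (3, 4); (3, 8); (4, 4);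
      (5, 8); (6, 12); (7, 8)].

Lemma moser4_small_roots :
  all (fun N => all (fun j =>
    moser4_eqbZ (Z.of_nat N) (Z.of_nat j) == ((j.+1, N) \in moser4_roots))
    (iota 0 12)) (iota 1 24).
Proof. by vm_compute. Qed.

Lemma moser4_root_natP N j :
  0 < N -> moser4_lhs N j = moser4_rhs N j <-> (j.+1, N) \in moser4_roots.
Proof.
move=> N_gt0.
have small_rootP : N <= 24 -> j < 12 ->
    moser4_lhs N j = moser4_rhs N j <-> (j.+1, N) \in moser4_roots.
  move=> N_le j_lt.
  have N_in : N \in iota 1 24 by rewrite mem_iota; lia.
  have j_in : j \in iota 0 12 by rewrite mem_iota; lia.
  move/allP/(_ N N_in)/allP/(_ j j_in)/eqP: moser4_small_roots => <-.
  exact: moser4_eqbZP.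
split => [root | mem_roots].
  have [N_ge25 | N_le24] := leqP 25 N; first by case/eqP: (moser4_no_root_ge25 j N_ge25).
  have [j_ge12 | j_lt12] := leqP 12 j.
    by have := moser4_lhs_lt_rhs N_le24 j_ge12; rewrite root ltnn.
  by apply/small_rootP.
by apply/small_rootP => //; move: mem_roots; rewrite !inE !xpair_eqE; lia.
Qed.

Local Open Scope ring_scope.

Lemma moser4_rootP (R : numFieldType) N k : (0 < N)%N -> (0 < k)%N ->
  (moser R 4 k).[N%:R] = 0 <-> (k, N) \in moser4_roots.
Proof.
case: k => // j N_gt0 _; rewrite -moser4_root_natP //.
by split => /eqP; [rewrite moser4_root_nat | rewrite -(moser4_root_nat R)] => /eqP.
Qed.

Lemma moser4_roots_gt4 k N : (4 < N)%N ->
  ((k, N) \in moser4_roots) =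
  ((k, Posz N) \in [:: (3%N, 8%:Z); (5%N, 8%:Z); (6%N, 12%:Z); (7%N, 8%:Z)]).
Proof.
move=> N_gt4.
rewrite (_ : [:: _; _; _; _] = [seq (p.1, Posz p.2) | p <- moser4_roots & (4 < p.2)%N]) //.
apply/idP/mapP => [mem_roots | [[k' N'] mem_roots [-> ->]]].
  by exists (k, N); rewrite // mem_filter N_gt4.
by move: mem_roots; rewrite mem_filter => /andP [].
Qed.

Lemma moser4_roots_le7 k N : (k, N) \in moser4_roots -> (k <= 7)%N.
Proof. by have /allP le7 : all (fun p => p.1 <= 7)%N moser4_roots by []; move/le7. Qed.

Theorem mainTheorem14 :
  (forall (n : int) (k : nat), 4 < n -> (1 <= k)%N ->
     ((moser rat 4 k).[n%:~R] = 0 <->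
      (k, n) \in [:: (3%N, 8%:Z); (5%N, 8%:Z); (6%N, 12%:Z); (7%N, 8%:Z)])) /\
  (forall (n : int) (k : nat), 0 < n -> (7 < k)%N -> (moser rat 4 k).[n%:~R] != 0).
Proof.
split=> [[N|//] k N_gt4 k_gt0 | [N|//] k N_gt0 k_gt7].
  by rewrite -pmulrn moser4_rootP -?moser4_roots_gt4 //; lia.
have k_gt0 : (0 < k)%N by lia.
by apply/eqP; rewrite -pmulrn moser4_rootP // => /moser4_roots_le7; lia.
Qed.
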